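(* Let $E$ be an acyclic directed graph and let $G(E)$ be a dense subsemigroup of a topological semigroup $S$. Then $s^2=0$ for every element $s\in S$ which is not an idempotent.
   Context: All spaces are Hausdorff. A directed graph $E=(E^0,E^1,r,s)$ has vertices $E^0$, edges $E^1$, source/range maps $s,r:E^1\to E^0$; paths are vertices and sequences of edges $e_1\ldots e_n$ with $r(e_i)=s(e_{i+1})$; a cycle is a path of non-zero length with equal source and range; acyclic means no cycles. The graph inverse semigroup $G(E)$ is the semigroup with zero $0$ generated by $E^0$, $E^1$, $E^{-1}=\{e^{-1}\mid e\in E^1\}$ subject to: for $a,b\in E^0$, $e,f\in E^1$: $ab=a$ if $a=b$, else $0$; $s(e)e=er(e)=e$; $e^{-1}s(e)=r(e)e^{-1}=e^{-1}$; $e^{-1}f=r(e)$ if $e=f$, else $0$. *)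

From mathcomp Require Import all_boot.
From mathcomp Require Import boolp classical_sets topology.
Set Implicit Arguments. Unset Strict Implicit. Unset Printing Implicit Defensive.
Local Open Scope classical_set_scope.

Section GraphInverseSemigroup.
Variables (V Ed : Type) (src rng : Ed -> V).

(* [path_to w l]: the edge list l = e1 ... en is a path (r(e_i) = s(e_{i+1}))
   whose range is the vertex w.  The empty list with range w is the
   vertex (path of length 0) w. *)
Fixpoint path_to (w : V) (l : seq Ed) : Prop :=
  match l with
  | [::] => True
  | e :: l' =>
      match l' with
      | [::] => rng e = w
      | f :: _ => rng e = src f
      end /\ path_to w l'
  end.

Definition psrc (w : V) (l : seq Ed) : V :=
  if l is e :: _ then src e else w.

Definition acyclic : Prop :=
  forall (w : V) (l : seq Ed), l <> [::] -> path_to w l -> psrc w l <> w.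

(* Raw carrier of G(E): GZ is the zero, GP w a b stands for a b^{-1},
   where a, b are paths with common range w. *)
Inductive gis : Type :=
| GZ : gis
| GP : V -> seq Ed -> seq Ed -> gis.

Definition gis_set : set gis :=
  fun x => match x with
           | GZ => True
           | GP w a b => path_to w a /\ path_to w b
           end.

Definition gvert (v : V) : gis := GP v [::] [::].
Definition gedge (e : Ed) : gis := GP (rng e) [:: e] [::].
Definition gghost (e : Ed) : gis := GP (rng e) [::] [:: e].

(* Multiplication in G(E):
   (a b^{-1})(c d^{-1}) = a c' d^{-1}      if c = b c',
                        = a (d b')^{-1}    if b = c b',
                        = 0                otherwise. *)
Definition gis_mul (x y : gis) : gis :=
  match x, y with
  | GP w1 a b, GP w2 c d =>
      if pselect (take (size b) c = b /\ psrc w2 c = psrc w1 b) then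
        GP w2 (a ++ drop (size b) c) d
      else if pselect (take (size c) b = c /\ psrc w1 b = psrc w2 c) then
        GP w1 a (d ++ drop (size c) b)
      else GZ
  | _, _ => GZ
  end.

End GraphInverseSemigroup.

Definition topological_semigroup (S : topologicalType) (mul : S -> S -> S) : Prop :=
  hausdorff_space S /\ associative mul /\
  continuous (fun p : S * S => mul p.1 p.2).

From mathcomp Require Import all_boot.
From mathcomp Require Import boolp classical_sets topology.
Set Implicit Arguments. Unset Strict Implicit. Unset Printing Implicit Defensive.
Local Open Scope classical_set_scope.

(* In G(E) the square of a b^{-1} is non-zero only if one of the paths a, b
   extends the other with the same source; the extension is then a path whose
   source and range coincide, so acyclicity makes it empty and the square is
   a b^{-1} itself.  Hence every element of G(E) squares to itself or to 0.
   In a Hausdorff topological semigroup the set of s with s^2 = s or s^2 = 0 is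
   closed, so it contains the closure of G(E), which is all of S. *)

Section AcyclicGraphInverseSemigroup.
Variables (V Ed : Type) (src rng : Ed -> V).

Lemma path_to_catr_src (w w' : V) (b c : seq Ed) :
  b <> [::] -> c <> [::] -> path_to src rng w b -> path_to src rng w' (b ++ c) ->
  path_to src rng w' c /\ psrc src w' c = w.
Proof.
elim: b => [//|e b IH] _ c0.
case: b IH => [_|f b IH] /=; last by move=> [_ pb] [_ pbc]; exact: IH.
by case: c c0 => [//|g c] _ /= [<- _] [-> pc].
Qed.

Hypothesis acyc : acyclic src rng.

Lemma acyclic_ext_nil (w : V) (b c : seq Ed) :
  path_to src rng w b -> path_to src rng w (b ++ c) ->
  psrc src w (b ++ c) = psrc src w b -> c = [::].
Proof.
move=> pb pbc src_eq; apply: contrapT => c0.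
have [pc src_c] : path_to src rng w c /\ psrc src w c = w.
  case: b pb pbc src_eq => [|e b] pb pbc src_eq; first by [].
  exact: (@path_to_catr_src w w (e :: b)).
exact: acyc c0 pc src_c.
Qed.

Lemma gis_mul_sqr (x : gis V Ed) : gis_set src rng x ->
  gis_mul src x x = x \/ gis_mul src x x = GZ V Ed.
Proof.
case: x => [|w a b] /=; first by right.
move=> [pa pb].
have drop_nil (p q : seq Ed) : path_to src rng w p -> path_to src rng w q ->
    take (size q) p = q -> psrc src w p = psrc src w q -> drop (size q) p = [::].
  move=> pp pq pre src_eq.
  have Ep : p = q ++ drop (size q) p by rewrite -{1}pre cat_take_drop.
  by apply: (acyclic_ext_nil pq); rewrite -Ep.
rewrite /gis_mul; case: pselect => /= [[pre src_eq]|_].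
  by left; rewrite (drop_nil a b) ?cats0.
case: pselect => /= [[pre src_eq]|_]; last by right.
by left; rewrite (drop_nil b a) ?cats0.
Qed.

End AcyclicGraphInverseSemigroup.

Lemma closed_eqfun (T U : topologicalType) (f g : T -> U) :
  hausdorff_space U -> continuous f -> continuous g -> closed [set x | f x = g x].
Proof.
move=> hU cf cg x clx; apply: hU => A B fxA gxB.
have /clx [y [fgy [Afy Bgy]]] : nbhs x (f @^-1` A `&` g @^-1` B).
  by apply: filterI; [exact: cf | exact: cg].
by exists (f y); split; rewrite //= fgy.
Qed.

Lemma closed_fix_or_eq (T : topologicalType) (f : T -> T) (z : T) :
  hausdorff_space T -> continuous f -> closed [set x | f x = x \/ f x = z].
Proof.
move=> hT cf; apply: (closedU (A := [set x | f x = x]) (B := [set x | f x = z])).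
  exact: (closed_eqfun (g := id) hT cf (fun=> cvg_id)).
exact: (closed_eqfun hT cf (@cst_continuous _ _ z)).
Qed.

Lemma continuous_sqr (S : topologicalType) (mul : S -> S -> S) :
  continuous (fun p : S * S => mul p.1 p.2) -> continuous (fun x => mul x x).
Proof. by move=> cmul x; exact: continuous2_cvg (cmul (x, x)) cvg_id cvg_id. Qed.

Theorem lemma4p2 (V Ed : Type) (src rng : Ed -> V)
    (S : topologicalType) (mul : S -> S -> S) (iota : gis V Ed -> S) :
  acyclic src rng ->
  topological_semigroup mul ->
  (* iota embeds G(E) into S as a subsemigroup ... *)
  (forall x y, gis_set src rng x -> gis_set src rng y ->
     iota x = iota y -> x = y) ->
  (forall x y, gis_set src rng x -> gis_set src rng y ->
     iota (gis_mul src x y) = mul (iota x) (iota y)) ->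
  (* ... which is dense in S *)
  closure (iota @` gis_set src rng) = setT ->
  forall s : S, mul s s <> s -> mul s s = iota (GZ V Ed).
Proof.
move=> acyc [hS [_ cmul]] _ iota_mul dense s sqr_neq.
set P := [set x | mul x x = x \/ mul x x = iota (GZ V Ed)].
have /closure_id clP : closed P := closed_fix_or_eq hS (continuous_sqr cmul).
have GP : iota @` gis_set src rng `<=` P.
  move=> _ [x Gx <-]; rewrite /P /= -iota_mul //.
  by case: (gis_mul_sqr acyc Gx) => ->; [left | right].
have : P s by rewrite clP; apply: (closureS GP); rewrite dense.
by case.
Qed.
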